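(* Let $\alpha,\gamma,\kappa$ be constants and $n=2^t$ such that $$7n^2 \frac{(\gamma n)^{\kappa n}}{(\kappa n)!} +3n^3\frac{(2\gamma n)^{(1-\alpha-2\gamma)n/3}}{((1-\alpha-2\gamma)n/3)!} < 1.$$ Then for any $(\gamma n,\gamma n,\gamma n,\gamma n)$-cube $A$ of order $n$ there is a quadruple $\sigma=(\tau_1,\tau_2,\tau_3,\tau_4)$ of permutations of $[n]$ (acting on the row layers, column layers, file layers and symbols, respectively) such that the Latin cube $L$ obtained by applying $\sigma$ to the Boolean Latin cube $B$ of order $n$ satisfies: (a) no row of $L$ contains more than $\kappa n$ conflicts with $A$; (b) no column of $L$ contains more than $\kappa n$ conflicts with $A$; (c) no file of $L$ contains more than $\kappa n$ conflicts with $A$; (d) no symbol-set of $L$ contains more than $\kappa n$ conflicts with $A$; (e) no transversal-set of $L$ contains more than $\kappa n$ conflicts with $A$; (f) each cell of $L$ belongs to at least $\alpha n$ allowed $3$-cubes of $L$.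
   Context: Cells of a cube of order $n$ are triples $(i,j,k)\in[n]^3$. A row is $\{(i,j^*,k):j^*\in[n]\}$, a column $\{(i^*,j,k):i^*\in[n]\}$, a file $\{(i,j,k^* ):k^*\in[n]\}$. Row layer $i$ is $\{(i,j^*,k^* )\}$, column layer $j$ is $\{(i^*,j,k^* )\}$, file layer $k$ is $\{(i^*,j^*,k)\}$. An $(m,m,m,m)$-cube of order $n$ is a cube $A$ with $A(i,j,k)\subseteq[n]$ for each cell, each cell containing at most $m$ symbols and each symbol occurring at most $m$ times in each row, each column and each file. A Latin cube $L$ of order $n$ has one symbol $L(i,j,k)\in[n]$ in each cell with each symbol exactly once in every row, column and file. Let $a_x$ be the $x$-th smallest element of $\mathbb{Z}_2^t$ (in the natural order of binary strings), $x=1,\dots,2^t$. The Boolean Latin cube $B$ of order $n=2^t$ has $B(i,j,k)=x$ where $a_x=a_i+a_j+a_k$ in $\mathbb{Z}_2^t$. Applying $\sigma=(\tau_1,\tau_2,\tau_3,\tau_4)$ to $B$ gives $L$ with $L(\tau_1(i),\tau_2(j),\tau_3(k))=\tau_4(B(i,j,k))$. A conflict of $L$ with $A$ is a cell with $L(i,j,k)\in A(i,j,k)$. A symbol-set of $L$ is the set of all cells in a given row layer, column layer or file layer of $L$ that contain a given symbol. A $3$-cube in $L$ is a set of eight cells $\{(i_a,j_b,k_c): a,b,c\in\{1,2\}\}$ with $i_1\ne i_2$, $j_1\neq j_2$, $k_1\ne k_2$, such that $L(i_1,j_1,k_1)=L(i_2,j_2,k_1)=L(i_1,j_2,k_2)=L(i_2,j_1,k_2)=x_1$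 and $L(i_1,j_2,k_1)=L(i_2,j_1,k_1)=L(i_1,j_1,k_2)=L(i_2,j_2,k_2)=x_2$. A swap on this $3$-cube replaces $x_1$ by $x_2$ and $x_2$ by $x_1$ in these eight cells (leaving all other cells unchanged), producing another Latin cube. A $3$-cube is allowed if after swapping on it none of its eight cells is a conflict. A transversal-set of $L$ is a set of $n$ cells no two in the same row, column or file, no two containing the same symbol, and such that any two of its cells lie in a unique common $3$-cube. Following the paper's convention, floors/ceilings are omitted, so quantities like $\gamma n$, $\kappa n$, $(1-\alpha-2\gamma)n/3$ are treated as integers. *)

From Stdlib Require PeanoNat.
From mathcomp Require Import all_boot all_order all_algebra all_fingroup.
Set Implicit Arguments. Unset Strict Implicit. Unset Printing Implicit Defensive.
Import Order.TTheory GRing.Theory Num.Theory.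

(* Symbols, row/column/file indices: [n] is represented by 'I_n
   (index x-1 in 'I_n stands for x in [n]). *)
Definition cell (n : nat) := ('I_n * 'I_n * 'I_n)%type.

Definition mcube (n : nat) := 'I_n -> 'I_n -> 'I_n -> {set 'I_n}.
Definition lcube (n : nat) := 'I_n -> 'I_n -> 'I_n -> 'I_n.

Definition is_mcube n (m : nat) (A : mcube n) : Prop :=
  (forall i j k, #|A i j k| <= m) /\
  (forall i k s, #|[set j | s \in A i j k]| <= m) /\
  (forall j k s, #|[set i | s \in A i j k]| <= m) /\
  (forall i j s, #|[set k | s \in A i j k]| <= m).

Definition is_latin n (L : lcube n) : Prop :=
  (forall i k s, exists! j, L i j k = s) /\
  (forall j k s, exists! i, L i j k = s) /\
  (forall i j s, exists! k, L i j k = s).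

(* Boolean Latin cube of order 2^t: index x (0-based) corresponds to the
   element of Z_2^t whose binary string is the binary expansion of x (this is
   the (x+1)-th smallest binary string), and addition in Z_2^t is bitwise xor. *)
Definition boolB (t : nat) : lcube (2 ^ t) :=
  fun i j k => insubd i (PeanoNat.Nat.lxor (PeanoNat.Nat.lxor i j) k).

(* Applying sigma = (t1,t2,t3,t4): L(t1 i, t2 j, t3 k) = t4 (B i j k). *)
Definition apply_sigma n (B : lcube n) (t1 t2 t3 t4 : {perm 'I_n}) : lcube n :=
  fun i j k => t4 (B ((t1^-1)%g i) ((t2^-1)%g j) ((t3^-1)%g k)).

Definition Lc n (L : lcube n) (c : cell n) : 'I_n := L c.1.1 c.1.2 c.2.

Definition conflict n (L : lcube n) (A : mcube n) (c : cell n) : bool :=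
  Lc L c \in A c.1.1 c.1.2 c.2.

Definition row_set n (i k : 'I_n) : {set cell n} :=
  [set c : cell n | (c.1.1 == i) && (c.2 == k)].
Definition col_set n (j k : 'I_n) : {set cell n} :=
  [set c : cell n | (c.1.2 == j) && (c.2 == k)].
Definition file_set n (i j : 'I_n) : {set cell n} :=
  [set c : cell n | (c.1.1 == i) && (c.1.2 == j)].

Definition rowlayer_symset n (L : lcube n) (i s : 'I_n) : {set cell n} :=
  [set c : cell n | (c.1.1 == i) && (Lc L c == s)].
Definition collayer_symset n (L : lcube n) (j s : 'I_n) : {set cell n} :=
  [set c : cell n | (c.1.2 == j) && (Lc L c == s)].
Definition filelayer_symset n (L : lcube n) (k s : 'I_n) : {set cell n} :=
  [set c : cell n | (c.2 == k) && (Lc L c == s)].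

Definition nconf n (L : lcube n) (A : mcube n) (S : {set cell n}) : nat :=
  #|[set c in S | conflict L A c]|.

Definition cube8 n (i1 i2 j1 j2 k1 k2 : 'I_n) : {set cell n} :=
  [set c : cell n | [&& (c.1.1 == i1) || (c.1.1 == i2),
                        (c.1.2 == j1) || (c.1.2 == j2) &
                        (c.2 == k1) || (c.2 == k2)]].

Definition cube_pattern n (L : lcube n) (i1 i2 j1 j2 k1 k2 x1 x2 : 'I_n) : bool :=
  [&& i1 != i2, j1 != j2, k1 != k2,
      [&& L i1 j1 k1 == x1, L i2 j2 k1 == x1, L i1 j2 k2 == x1 & L i2 j1 k2 == x1] &
      [&& L i1 j2 k1 == x2, L i2 j1 k1 == x2, L i1 j1 k2 == x2 & L i2 j2 k2 == x2]].

Definition is_3cube n (L : lcube n) (C : {set cell n}) : bool :=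
  [exists i1, exists i2, exists j1, exists j2, exists k1, exists k2,
   exists x1, exists x2,
    cube_pattern L i1 i2 j1 j2 k1 k2 x1 x2 && (C == cube8 i1 i2 j1 j2 k1 k2)].

(* C is an allowed 3-cube: after the swap (x1 <-> x2 on the eight cells),
   none of the eight cells is a conflict with A. *)
Definition allowed_3cube n (L : lcube n) (A : mcube n) (C : {set cell n}) : bool :=
  [exists i1, exists i2, exists j1, exists j2, exists k1, exists k2,
   exists x1, exists x2,
    [&& cube_pattern L i1 i2 j1 j2 k1 k2 x1 x2,
        C == cube8 i1 i2 j1 j2 k1 k2 &
        [forall c in C,
          (if Lc L c == x1 then x2 else x1) \notin A c.1.1 c.1.2 c.2]]].

Definition is_transversal_set n (L : lcube n) (T : {set cell n}) : Prop :=
  [/\ #|T| = n,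
      forall c d, c \in T -> d \in T -> c != d ->
        [/\ ~ (c.1.1 = d.1.1 /\ c.2 = d.2),
            ~ (c.1.2 = d.1.2 /\ c.2 = d.2),
            ~ (c.1.1 = d.1.1 /\ c.1.2 = d.1.2)
          & Lc L c <> Lc L d] &
      forall c d, c \in T -> d \in T -> c != d ->
        exists! C : {set cell n}, [/\ is_3cube L C, c \in C & d \in C]].

From Stdlib Require Import PeanoNat.
From mathcomp Require Import all_boot all_order all_algebra all_fingroup.
From mathcomp Require Import zify ring lra.
Set Implicit Arguments. Unset Strict Implicit. Unset Printing Implicit Defensive.

(* Choose sigma = (t1, t2, t3, t4) uniformly at random.  In the relabelled
   coordinates (t1^-1 i, t2^-1 j, t3^-1 k) the cube L holds t4 (i ⊕ j ⊕ k),
   where ⊕ is bitwise xor.  Hence every transversal-set lies on a diagonal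
   {(x, x ⊕ p, x ⊕ q)}, and the cells (i ⊕ a, j ⊕ b, k ⊕ c), a, b, c in {0, d},
   form a 3-cube for every d <> 0, whose swap replaces each symbol y by y ⊕ d.
   Too many conflicts on a row, column, file, symbol-set or transversal-set,
   or too few allowed 3-cubes through a cell, therefore forces one of the
   four permutations, the other three being fixed, to map r prescribed points
   into prescribed sets of size at most gamma n (resp. 2 gamma n).  At most
   (gamma n)^r n! / r! permutations do so.  Summing over the 7 n^2 line events
   (r = kappa n) and the 3 n^3 cube events (r = m := (1 - alpha - 2 gamma) n / 3),
   the hypothesis says that fewer than n!^4 quadruples are bad; for a good one,
   at most 2 gamma n + 3 (m - 1) of the n - 1 directions d fail to give an
   allowed 3-cube through a given cell. *)

(** * Permutations sending many points into small sets *)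

Lemma card_bigcup_leq (T J : finType) (D : {pred J}) (F : J -> {set T}) :
  #|\bigcup_(j in D) F j| <= \sum_(j in D) #|F j|.
Proof.
elim/big_rec2: _ => [|j U s _ IH]; first by rewrite cards0.
exact: leq_trans (leq_card_setU _ _).1 (leq_add (leqnn _) IH).
Qed.

Lemma subset_of_card (T : finType) (P : {set T}) r :
  r <= #|P| -> exists2 X : {set T}, X \subset P & #|X| = r.
Proof.
move=> /card_geqP [s [s_uniq s_size sP]].
exists [set x in s]; first by apply/subsetP => x; rewrite inE => /sP.
by rewrite cardsE (card_uniqP s_uniq).
Qed.

Lemma leq_card_in_inj (T U : finType) (X : {set T}) (Y : {set U}) (f : T -> U) :
  {in X &, injective f} -> {in X, forall x, f x \in Y} -> #|X| <= #|Y|.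
Proof.
move=> f_inj fXY; rewrite -(card_in_imset f_inj); apply: subset_leq_card.
by apply/subsetP => _ /imsetP [x xX ->]; exact: fXY.
Qed.

Lemma permV_in_pair (T : finType) (s : {perm T}) u a b :
  (u == s a) || (u == s b) -> (s^-1)%g u \in [:: a; b].
Proof. by rewrite !inE => /orP [] /eqP->; rewrite permK eqxx ?orbT. Qed.

Section PermutationHits.

Variables (n : nat) (I : finType) (pos : I -> 'I_n).
Hypothesis pos_inj : injective pos.

Definition hits (s : {perm 'I_n}) (S : I -> {set 'I_n}) :=
  #|[set i | s (pos i) \in S i]|.

Lemma card_perm_prescribed (Y : {set I}) (y : I -> 'I_n) :
  #|[set s : {perm 'I_n} | [forall i in Y, s (pos i) == y i]]| <= (n - #|Y|)`!.
Proof.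
set P := [set s | _].
have [->|[s0 Ps0]] := set_0Vmem P; first by rewrite cards0.
have s0E i : i \in Y -> s0 (pos i) = y i.
  by move=> iY; move: Ps0; rewrite inE => /forall_inP/(_ i iY)/eqP.
pose W := [set y i | i in Y].
have cardW : #|W| = #|Y|.
  by rewrite card_in_imset // => i j iY jY; rewrite -!s0E // => /perm_inj/pos_inj.
have shift : [set (s0^-1 * s)%g | s in P] \subset perm_on (~: W).
  apply/subsetP => _ /imsetP [s Ps ->]; apply/subsetP => x; rewrite !inE.
  apply: contraR; rewrite negbK => /imsetP [i iY ->].
  move: Ps; rewrite inE => /forall_inP/(_ i iY)/eqP sE.
  by rewrite permM -s0E // permK sE s0E.
have := subset_leq_card shift; rewrite card_imset; last exact: mulgI.
by rewrite card_perm cardsCs setCK card_ord cardW.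
Qed.

Lemma card_perm_prescribed_hits G (S : I -> {set 'I_n}) (X Y : {set I}) (y : I -> 'I_n) :
  (forall i, #|S i| <= G) -> [disjoint X & Y] ->
  #|[set s : {perm 'I_n} | [forall i in Y, s (pos i) == y i]
                          && [forall i in X, s (pos i) \in S i]]|
    <= G ^ #|X| * (n - #|Y| - #|X|)`!.
Proof.
move=> SG; have [r cardX] : exists r, #|X| = r by eexists.
rewrite cardX; elim: r X Y y cardX => [|r IH] X Y y cardX XY.
  have -> : X = set0 by apply/eqP; rewrite -cards_eq0 cardX.
  rewrite mul1n subn0; apply: leq_trans (card_perm_prescribed Y y).
  by apply: subset_leq_card; apply/subsetP => s; rewrite !inE => /andP [].
have [x xX] : exists x, x \in X by apply/card_gt0P; rewrite cardX.
have xY : x \notin Y by apply: contraL XY => xY; apply/pred0Pn; exists x; rewrite /= xX.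
pose y' (z : 'I_n) i := if i == x then z else y i.
pose P z := [set s : {perm 'I_n} | [forall i in x |: Y, s (pos i) == y' z i]
                          && [forall i in X :\ x, s (pos i) \in S i]].
have split_x : [set s : {perm 'I_n} | [forall i in Y, s (pos i) == y i]
                          && [forall i in X, s (pos i) \in S i]]
    \subset \bigcup_(z in S x) P z.
  apply/subsetP => s; rewrite inE => /andP [/forall_inP sY /forall_inP sX].
  apply/bigcupP; exists (s (pos x)); first exact: sX.
  rewrite inE; apply/andP; split; apply/forall_inP => i; rewrite !inE /y'.
    by case: eqP => [->|_] //= /sY.
  by case/andP => _ /sX.
apply: leq_trans (subset_leq_card split_x) _.
apply: leq_trans (card_bigcup_leq _ _) _.
have cardX' : #|X :\ x| = r by move: cardX; rewrite (cardsD1 x) xX => -[].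
have XY' : [disjoint X :\ x & x |: Y].
  rewrite disjoints_subset; apply/subsetP => i; rewrite !inE negb_or.
  case/andP => -> iX /=; apply: contraL XY => iY.
  by apply/pred0Pn; exists i; rewrite /= iX.
apply: (@leq_trans (\sum_(z in S x) G ^ r * (n - #|x |: Y| - r)`!)).
  by apply: leq_sum => z _; exact: IH.
rewrite sum_nat_const cardsU1 xY (_ : n - (1 + #|Y|) - r = n - #|Y| - r.+1); last by lia.
by rewrite expnS mulnA leq_mul2r leq_mul2r SG !orbT.
Qed.

Lemma card_perm_many_hits G (S : I -> {set 'I_n}) r :
  (forall i, #|S i| <= G) ->
  #|[set s : {perm 'I_n} | r <= hits s S]| * r`! <= G ^ r * n`!.
Proof.
move=> SG.
have cover : [set s : {perm 'I_n} | r <= hits s S] \subset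
    \bigcup_(X in [set X : {set I} | #|X| == r])
      [set s : {perm 'I_n} | [forall i in set0, s (pos i) == pos i]
                          && [forall i in X, s (pos i) \in S i]].
  apply/subsetP => s; rewrite inE => /subset_of_card [X XP cardX].
  apply/bigcupP; exists X; first by rewrite inE cardX.
  rewrite inE; apply/andP; split; apply/forall_inP => i; rewrite ?inE //.
  by move/(subsetP XP); rewrite inE.
have cardI : #|I| <= n by rewrite -(card_ord n); exact: leq_card pos_inj.
have count : #|[set s : {perm 'I_n} | r <= hits s S]| <= 'C(#|I|, r) * (G ^ r * (n - r)`!).
  apply: leq_trans (subset_leq_card cover) _.
  apply: leq_trans (card_bigcup_leq _ _) _.
  rewrite -card_draws -sum_nat_const; apply: leq_sum => X; rewrite inE => /eqP cardX.
  have XY : [disjoint X & set0] by rewrite -setI_eq0 setI0.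
  by have := card_perm_prescribed_hits pos SG XY; rewrite cards0 subn0 cardX.
have [rn|nr] := leqP r n; last first.
  by move: count; rewrite bin_small ?(leq_ltn_trans cardI) // leqn0 => /eqP ->.
rewrite -(bin_fact rn); apply: leq_trans (leq_mul count (leqnn _)) _.
move: (leq_bin2l r cardI) (G ^ r) (r`!) ((n - r)`!) => le_bin a b c.
apply: (@leq_trans ('C(n, r) * (a * c) * b)); first by rewrite !leq_mul2r le_bin !orbT.
by apply: eq_leq; ring.
Qed.

End PermutationHits.

(** * Sums over quadruples of permutations *)

Section QuadrupleSums.

Variable n : nat.
Local Notation perm := {perm 'I_n}.
Implicit Types F G : perm -> perm -> perm -> perm -> nat.

Definition sum4 F := \sum_(a : perm) \sum_(b : perm) \sum_(c : perm) \sum_(d : perm) F a b c d.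

Lemma leq_sum4 F G : (forall a b c d, F a b c d <= G a b c d) -> sum4 F <= sum4 G.
Proof. by move=> FG; do 4 (apply: leq_sum => ? _); exact: FG. Qed.

Lemma sum4D F G : sum4 (fun a b c d => F a b c d + G a b c d) = sum4 F + sum4 G.
Proof. by rewrite /sum4 -big_split; do 3 (apply: eq_bigr => ? _; rewrite -big_split). Qed.

Lemma sum4_sum (J : finType) (F : J -> perm -> perm -> perm -> perm -> nat) :
  sum4 (fun a b c d => \sum_(x : J) F x a b c d) = \sum_(x : J) sum4 (F x).
Proof.
by rewrite /sum4; do 3 (rewrite [RHS]exchange_big; apply: eq_bigr => ? _); exact: exchange_big.
Qed.

Lemma sum4_const x : sum4 (fun _ _ _ _ => x) = n`! ^ 4 * x.
Proof. by rewrite /sum4 !sum_nat_const card_Sn; ring. Qed.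

Lemma sum4_lt_exists (P : perm -> perm -> perm -> perm -> bool) :
  sum4 (fun a b c d => P a b c d) < n`! ^ 4 -> exists a b c d, ~~ P a b c d.
Proof.
case: (boolP [exists a, exists b, exists c, exists d, ~~ P a b c d]).
  by case/existsP => a /existsP [b /existsP [c /existsP [d Pabcd]]]; exists a, b, c, d.
move=> /existsPn allP; suff -> : sum4 (fun a b c d => P a b c d) = n`! ^ 4 by rewrite ltnn.
transitivity (sum4 (fun _ _ _ _ => 1)); last by rewrite sum4_const muln1.
apply: eq_bigr => a _; apply: eq_bigr => b _; apply: eq_bigr => c _; apply: eq_bigr => d _.
by move: (allP a) => /existsPn/(_ b)/existsPn/(_ c)/existsPn/(_ d); rewrite negbK => ->.
Qed.

Lemma sum4_slice4 (E : perm -> perm -> perm -> perm -> bool) w K :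
  (forall a b c, #|[set d | E a b c d]| * w <= K) ->
  sum4 (fun a b c d => E a b c d) * w <= K * n`! ^ 3.
Proof.
move=> EK; rewrite /sum4.
apply: (@leq_trans (\sum_(a : perm) \sum_(b : perm) \sum_(c : perm) K)).
  rewrite big_distrl; apply: leq_sum => a _; rewrite big_distrl; apply: leq_sum => b _.
  rewrite big_distrl; apply: leq_sum => c _; apply: leq_trans (EK a b c).
  rewrite -sum1_card [X in _ <= X * _]big_mkcond; apply: eq_leq; congr (_ * _).
  by apply: eq_bigr => d _; rewrite inE; case: (E a b c d).
by apply: eq_leq; rewrite !sum_nat_const card_Sn; ring.
Qed.

Lemma sum4_slice1 (E : perm -> perm -> perm -> perm -> bool) w K :
  (forall b c d, #|[set a | E a b c d]| * w <= K) ->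
  sum4 (fun a b c d => E a b c d) * w <= K * n`! ^ 3.
Proof.
have -> : sum4 (fun a b c d => E a b c d) = sum4 (fun b c d a => E a b c d).
  rewrite /sum4 exchange_big; apply: eq_bigr => b _.
  by rewrite exchange_big; apply: eq_bigr => c _; rewrite exchange_big.
exact: sum4_slice4.
Qed.

Lemma sum4_slice2 (E : perm -> perm -> perm -> perm -> bool) w K :
  (forall a c d, #|[set b | E a b c d]| * w <= K) ->
  sum4 (fun a b c d => E a b c d) * w <= K * n`! ^ 3.
Proof.
have -> : sum4 (fun a b c d => E a b c d) = sum4 (fun a c d b => E a b c d).
  rewrite /sum4; apply: eq_bigr => a _.
  by rewrite exchange_big; apply: eq_bigr => c _; rewrite exchange_big.
exact: sum4_slice4.
Qed.

Lemma sum4_slice3 (E : perm -> perm -> perm -> perm -> bool) w K :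
  (forall a b d, #|[set c | E a b c d]| * w <= K) ->
  sum4 (fun a b c d => E a b c d) * w <= K * n`! ^ 3.
Proof.
have -> : sum4 (fun a b c d => E a b c d) = sum4 (fun a b d c => E a b c d).
  by rewrite /sum4; apply: eq_bigr => a _; apply: eq_bigr => b _; rewrite exchange_big.
exact: sum4_slice4.
Qed.

End QuadrupleSums.

(** * Xor on 'I_(2 ^ t) *)

Section BooleanGroup.

Variable t : nat.
Local Notation n := (2 ^ t).

Lemma lxor_lt_pow2 (a b : nat) : a < n -> b < n -> Nat.lxor a b < n.
Proof.
have -> : n = Nat.pow 2 t by elim: t => //= t' IH; rewrite expnS IH.
move=> /ltP lt_a /ltP lt_b; apply/ltP.
have pow_neq0 : Nat.pow 2 t <> 0 by apply: Nat.pow_nonzero.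
have mod_a := Nat.mod_small _ _ lt_a; have mod_b := Nat.mod_small _ _ lt_b.
suff <- : Nat.modulo (Nat.lxor a b) (Nat.pow 2 t) = Nat.lxor a b by exact: Nat.mod_upper_bound.
apply: Nat.bits_inj => i; have [lt_it|le_ti] := Nat.lt_ge_cases i t.
  by rewrite Nat.mod_pow2_bits_low.
by rewrite Nat.mod_pow2_bits_high // Nat.lxor_spec -mod_a -mod_b !Nat.mod_pow2_bits_high.
Qed.

Definition bxor (a b : 'I_n) : 'I_n := insubd a (Nat.lxor a b).
Definition bzero : 'I_n := Ordinal (expn_gt0 2 t).

Lemma val_bxor a b : val (bxor a b) = Nat.lxor a b.
Proof. by rewrite /bxor insubdK //; apply: lxor_lt_pow2. Qed.

Lemma boolBE i j k : boolB i j k = bxor (bxor i j) k.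
Proof.
apply: val_inj; rewrite val_bxor /boolB insubdK ?val_bxor //.
by apply: lxor_lt_pow2 => //; apply: lxor_lt_pow2.
Qed.

End BooleanGroup.

Local Infix "⊕" := bxor (at level 50, left associativity).

Ltac bxor_bits :=
  apply: val_inj => /=; rewrite ?val_bxor;
  apply: Nat.bits_inj => ?; rewrite ?Nat.lxor_spec ?Nat.bits_0;
  repeat match goal with |- context [Nat.testbit ?x ?i] => destruct (Nat.testbit x i) end;
  reflexivity.

Section BooleanGroupTheory.

Variable t : nat.
Implicit Types a b c d p q u v D : 'I_(2 ^ t).

Lemma bxorC a b : a ⊕ b = b ⊕ a.
Proof. bxor_bits. Qed.

Lemma bxorK a b : a ⊕ b ⊕ b = a.
Proof. bxor_bits. Qed.

Lemma bxorI a : injective (bxor a).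
Proof. by move=> b c e; rewrite -[b](bxorK _ a) -[c](bxorK _ a) !(bxorC _ a) e. Qed.

Lemma bxorIr a : injective (fun b => b ⊕ a).
Proof. by move=> b c /= e; rewrite -[b](bxorK _ a) -[c](bxorK _ a) e. Qed.

Lemma bxor_solve_mid a b c x : a ⊕ b ⊕ c = x -> a ⊕ x ⊕ c = b.
Proof. by move=> <-; bxor_bits. Qed.

Lemma bxor_solve_left a b c x : a ⊕ b ⊕ c = x -> b ⊕ x ⊕ c = a.
Proof. by move=> <-; bxor_bits. Qed.

Lemma bxor_cancel_r a b a' b' c : a ⊕ b ⊕ c = a' ⊕ b' ⊕ c -> b ⊕ b' = a ⊕ a'.
Proof.
move=> /bxorIr e; have -> : b' = a' ⊕ (a' ⊕ b') by bxor_bits.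
by rewrite -e; bxor_bits.
Qed.

Lemma bxor_cancel_l a b c b' c' : a ⊕ b ⊕ c = a ⊕ b' ⊕ c' -> c ⊕ c' = b ⊕ b'.
Proof.
move=> e; have -> : c' = a ⊕ b' ⊕ (a ⊕ b' ⊕ c') by bxor_bits.
by rewrite -e; bxor_bits.
Qed.

Lemma bxor_pair u v a b : u \in [:: a; b] -> v \in [:: a; b] -> v = u \/ v = u ⊕ (a ⊕ b).
Proof.
rewrite !inE => /orP [] /eqP-> /orP [] /eqP->; [left | right | right | left] => //; bxor_bits.
Qed.

Lemma bxor_diagonal a b c a' b' c' D :
  a' = a \/ a' = a ⊕ D -> b' = b \/ b' = b ⊕ D -> c' = c \/ c' = c ⊕ D ->
  ~ (a = a' /\ c = c') -> ~ (b = b' /\ c = c') -> ~ (a = a' /\ b = b') ->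
  a ⊕ b ⊕ c != a' ⊕ b' ⊕ c' -> b = a ⊕ (a' ⊕ b') /\ c = a ⊕ (a' ⊕ c').
Proof.
case=> ->; case=> ->; case=> -> // nac nbc nab /eqP nsym;
  first [by case: nac | by case: nbc | by case: nab | by case: nsym; bxor_bits | split; bxor_bits].
Qed.

Lemma bxor_diag_sum a p q : a ⊕ p ⊕ q = a ⊕ (a ⊕ p) ⊕ (a ⊕ q).
Proof. bxor_bits. Qed.

Lemma bxor_neq a d : d != bzero t -> a != a ⊕ d.
Proof.
move=> d_neq0; apply: contraNneq d_neq0 => e; apply/eqP.
transitivity (a ⊕ (a ⊕ d)); first by bxor_bits.
by rewrite -e; bxor_bits.
Qed.

Lemma bxor_cube_sum (i j k d i' j' k' : 'I_(2 ^ t)) :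
  i' \in [:: i; i ⊕ d] -> j' \in [:: j; j ⊕ d] -> k' \in [:: k; k ⊕ d] ->
  i' ⊕ j' ⊕ k' \in [:: i ⊕ j ⊕ k; i ⊕ j ⊕ k ⊕ d].
Proof.
rewrite !inE => /orP [] /eqP-> /orP [] /eqP-> /orP [] /eqP->; apply/orP;
  first [by left; apply/eqP; bxor_bits | by right; apply/eqP; bxor_bits].
Qed.

Lemma bxor_swap b d s : d != bzero t -> s \in [:: b; b ⊕ d] ->
  (if s == b then b ⊕ d else b) = s ⊕ d.
Proof.
move=> d_neq0; rewrite !inE => /orP [] /eqP->; first by rewrite eqxx.
by rewrite eq_sym (negbTE (bxor_neq b d_neq0)); bxor_bits.
Qed.

End BooleanGroupTheory.

(** * The relabelled Boolean cube *)

Section RelabelledBooleanCube.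

Variables (t : nat) (A : mcube (2 ^ t)) (t1 t2 t3 t4 : {perm 'I_(2 ^ t)}).
Local Notation n := (2 ^ t).
Local Notation L := (apply_sigma (@boolB t) t1 t2 t3 t4).
Local Notation "s ^-1" := (s^-1)%g.

Lemma sigmaE i j k : L i j k = t4 (t1^-1 i ⊕ t2^-1 j ⊕ t3^-1 k).
Proof. by rewrite /apply_sigma boolBE. Qed.

Lemma sigmaE_perm i j k : L (t1 i) (t2 j) (t3 k) = t4 (i ⊕ j ⊕ k).
Proof. by rewrite sigmaE !permK. Qed.

Lemma sigma_symbol i j k s : L i j k = s -> t1^-1 i ⊕ t2^-1 j ⊕ t3^-1 k = t4^-1 s.
Proof. by rewrite sigmaE => <-; rewrite permK. Qed.

(* The indices of the [*_hits] counts are relabelled coordinates and, for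
   symbol-sets, the relabelled symbol t4^-1 s. *)
Definition row_hits i k := hits (fun j => i ⊕ j ⊕ k) t4 (fun j => A (t1 i) (t2 j) (t3 k)).
Definition col_hits j k := hits (fun i => i ⊕ j ⊕ k) t4 (fun i => A (t1 i) (t2 j) (t3 k)).
Definition file_hits i j := hits (fun k => i ⊕ j ⊕ k) t4 (fun k => A (t1 i) (t2 j) (t3 k)).
Definition rowsym_hits i x :=
  hits (fun k => i ⊕ x ⊕ k) t2 (fun k => [set j | t4 x \in A (t1 i) j (t3 k)]).
Definition colsym_hits j x :=
  hits (fun k => j ⊕ x ⊕ k) t1 (fun k => [set i | t4 x \in A i (t2 j) (t3 k)]).
Definition filesym_hits k x :=
  hits (fun j => j ⊕ x ⊕ k) t1 (fun j => [set i | t4 x \in A i (t2 j) (t3 k)]).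
Definition transversal_hits p q :=
  hits (fun i => i ⊕ p ⊕ q) t4 (fun i => A (t1 i) (t2 (i ⊕ p)) (t3 (i ⊕ q))).

Lemma nconf_row i k : nconf L A (row_set i k) <= row_hits (t1^-1 i) (t3^-1 k).
Proof.
apply: (leq_card_in_inj (f := fun c : cell n => t2^-1 c.1.2)).
  move=> [[i1 j1] k1] [[i2 j2] k2]; rewrite !inE /=.
  by move=> /andP [/andP [/eqP-> /eqP->] _] /andP [/andP [/eqP-> /eqP->] _] /perm_inj->.
move=> [[i' j] k']; rewrite !inE /conflict /Lc /= => /andP [/andP [/eqP-> /eqP->]].
by rewrite sigmaE !permKV.
Qed.

Lemma nconf_col j k : nconf L A (col_set j k) <= col_hits (t2^-1 j) (t3^-1 k).
Proof.
apply: (leq_card_in_inj (f := fun c : cell n => t1^-1 c.1.1)).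
  move=> [[i1 j1] k1] [[i2 j2] k2]; rewrite !inE /=.
  by move=> /andP [/andP [/eqP-> /eqP->] _] /andP [/andP [/eqP-> /eqP->] _] /perm_inj->.
move=> [[i j'] k']; rewrite !inE /conflict /Lc /= => /andP [/andP [/eqP-> /eqP->]].
by rewrite sigmaE !permKV.
Qed.

Lemma nconf_file i j : nconf L A (file_set i j) <= file_hits (t1^-1 i) (t2^-1 j).
Proof.
apply: (leq_card_in_inj (f := fun c : cell n => t3^-1 c.2)).
  move=> [[i1 j1] k1] [[i2 j2] k2]; rewrite !inE /=.
  by move=> /andP [/andP [/eqP-> /eqP->] _] /andP [/andP [/eqP-> /eqP->] _] /perm_inj->.
move=> [[i' j'] k]; rewrite !inE /conflict /Lc /= => /andP [/andP [/eqP-> /eqP->]].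
by rewrite sigmaE !permKV.
Qed.

Lemma nconf_rowsym i s :
  nconf L A (rowlayer_symset L i s) <= rowsym_hits (t1^-1 i) (t4^-1 s).
Proof.
apply: (leq_card_in_inj (f := fun c : cell n => t3^-1 c.2)).
  move=> [[i1 j1] k1] [[i2 j2] k2]; rewrite !inE /Lc /=.
  move=> /andP [/andP [/eqP-> /eqP/sigma_symbol/bxor_solve_mid e1] _].
  move=> /andP [/andP [/eqP-> /eqP/sigma_symbol/bxor_solve_mid e2] _] ek.
  by move: e1 e2; rewrite ek => -> /perm_inj->; rewrite (perm_inj ek).
move=> [[i' j] k]; rewrite !inE /conflict /Lc /= => /andP [/andP [/eqP-> /eqP e]].
by move: (e) => /sigma_symbol/bxor_solve_mid->; rewrite !permKV -e.
Qed.

Lemma nconf_colsym j s :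
  nconf L A (collayer_symset L j s) <= colsym_hits (t2^-1 j) (t4^-1 s).
Proof.
apply: (leq_card_in_inj (f := fun c : cell n => t3^-1 c.2)).
  move=> [[i1 j1] k1] [[i2 j2] k2]; rewrite !inE /Lc /=.
  move=> /andP [/andP [/eqP-> /eqP/sigma_symbol/bxor_solve_left e1] _].
  move=> /andP [/andP [/eqP-> /eqP/sigma_symbol/bxor_solve_left e2] _] ek.
  by move: e1 e2; rewrite ek => -> /perm_inj->; rewrite (perm_inj ek).
move=> [[i j'] k]; rewrite !inE /conflict /Lc /= => /andP [/andP [/eqP-> /eqP e]].
by move: (e) => /sigma_symbol/bxor_solve_left->; rewrite !permKV -e.
Qed.

Lemma nconf_filesym k s :
  nconf L A (filelayer_symset L k s) <= filesym_hits (t3^-1 k) (t4^-1 s).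
Proof.
apply: (leq_card_in_inj (f := fun c : cell n => t2^-1 c.1.2)).
  move=> [[i1 j1] k1] [[i2 j2] k2]; rewrite !inE /Lc /=.
  move=> /andP [/andP [/eqP-> /eqP/sigma_symbol/bxor_solve_left e1] _].
  move=> /andP [/andP [/eqP-> /eqP/sigma_symbol/bxor_solve_left e2] _] ej.
  by move: e1 e2; rewrite ej => -> /perm_inj->; rewrite (perm_inj ej).
move=> [[i j] k']; rewrite !inE /conflict /Lc /= => /andP [/andP [/eqP-> /eqP e]].
by move: (e) => /sigma_symbol/bxor_solve_left->; rewrite !permKV -e.
Qed.

Lemma three_cube_sides C : is_3cube L C ->
  exists i1 i2 j1 j2 k1 k2,
    [/\ C = cube8 (t1 i1) (t1 i2) (t2 j1) (t2 j2) (t3 k1) (t3 k2),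
        j1 ⊕ j2 = i1 ⊕ i2 & k1 ⊕ k2 = i1 ⊕ i2].
Proof.
case/existsP => i1 /existsP [i2 /existsP [j1 /existsP [j2 /existsP [k1 /existsP [k2
  /existsP [x1 /existsP [x2 /andP [pat /eqP ->]]]]]]]].
move: pat => /and5P [_ _ _ /and4P [/eqP e1 /eqP e2 /eqP e3 _] _].
exists (t1^-1 i1), (t1^-1 i2), (t2^-1 j1), (t2^-1 j2), (t3^-1 k1), (t3^-1 k2).
have sides_ij := bxor_cancel_r (etrans (sigma_symbol e1) (esym (sigma_symbol e2))).
have sides_jk := bxor_cancel_l (etrans (sigma_symbol e1) (esym (sigma_symbol e3))).
by rewrite !permKV -sides_ij.
Qed.

Lemma transversal_diagonal T c0 : is_transversal_set L T -> c0 \in T ->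
  {in T, forall c, t2^-1 c.1.2 = t1^-1 c.1.1 ⊕ (t1^-1 c0.1.1 ⊕ t2^-1 c0.1.2)
                /\ t3^-1 c.2 = t1^-1 c.1.1 ⊕ (t1^-1 c0.1.1 ⊕ t3^-1 c0.2)}.
Proof.
move=> [_ distinct unique_cube] c0T c cT; have [->|c_neq] := eqVneq c c0.
  by split; bxor_bits.
have [nrow ncol nfile nsym] := distinct c c0 cT c0T c_neq.
have [C [[/three_cube_sides [i1 [i2 [j1 [j2 [k1 [k2 [-> sides_j sides_k]]]]]]] cC c0C] _]]
  := unique_cube c c0 cT c0T c_neq.
move: cC c0C; rewrite !inE => /and3P [ci cj ck] /and3P [c0i c0j c0k].
have := bxor_pair (permV_in_pair ci) (permV_in_pair c0i).
have := bxor_pair (permV_in_pair cj) (permV_in_pair c0j); rewrite sides_j.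
have := bxor_pair (permV_in_pair ck) (permV_in_pair c0k); rewrite sides_k.
move=> hk hj hi; apply: bxor_diagonal hi hj hk _ _ _ _.
- by case=> /perm_inj e1 /perm_inj e3; apply: nrow.
- by case=> /perm_inj e2 /perm_inj e3; apply: ncol.
- by case=> /perm_inj e1 /perm_inj e2; apply: nfile.
- by apply/eqP => e; apply: nsym; rewrite /Lc !sigmaE e.
Qed.

Lemma nconf_transversal T : is_transversal_set L T ->
  exists p q, nconf L A T <= transversal_hits p q.
Proof.
move=> transT; have [->|[c0 c0T]] := set_0Vmem T.
  exists (bzero t), (bzero t); rewrite /nconf (_ : [set c in set0 | _] = set0) ?cards0 //.
  by apply/setP => c; rewrite !inE.
have diag := transversal_diagonal transT c0T.
exists (t1^-1 c0.1.1 ⊕ t2^-1 c0.1.2), (t1^-1 c0.1.1 ⊕ t3^-1 c0.2).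
apply: (leq_card_in_inj (f := fun c : cell n => t1^-1 c.1.1)).
  move=> [[i1 j1] k1] [[i2 j2] k2]; rewrite !inE => /andP [/diag [/= ej1 ek1] _].
  move=> /andP [/diag [/= ej2 ek2] _] /= ei.
  by rewrite ei -ej2 -ek2 in ej1 ek1; rewrite (perm_inj ei) (perm_inj ej1) (perm_inj ek1).
move=> [[i j] k]; rewrite !inE /conflict /Lc => /andP [/diag [/= ej ek]].
by rewrite (bxor_diag_sum (t1^-1 i)) -ej -ek !permKV sigmaE.
Qed.

Definition cube_at i j k d :=
  cube8 (t1 i) (t1 (i ⊕ d)) (t2 j) (t2 (j ⊕ d)) (t3 k) (t3 (k ⊕ d)).

Lemma cube_at_inj i j k d d' : d != bzero t -> cube_at i j k d = cube_at i j k d' -> d = d'.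
Proof.
move=> d_neq0 e.
have : (t1 (i ⊕ d), t2 j, t3 k) \in cube_at i j k d' by rewrite -e !inE !eqxx !orbT.
rewrite !inE /= !eqxx !orTb !andbT !(inj_eq perm_inj) eq_sym.
by rewrite (negbTE (bxor_neq i d_neq0)) => /eqP/bxorI.
Qed.

Lemma allowed_cube_at i j k d : d != bzero t ->
  (forall i' j' k', i' \in [:: i; i ⊕ d] -> j' \in [:: j; j ⊕ d] -> k' \in [:: k; k ⊕ d] ->
     t4 (i' ⊕ j' ⊕ k' ⊕ d) \notin A (t1 i') (t2 j') (t3 k')) ->
  allowed_3cube L A (cube_at i j k d).
Proof.
move=> d_neq0 swap_free; apply/existsP; exists (t1 i); apply/existsP; exists (t1 (i ⊕ d)).
apply/existsP; exists (t2 j); apply/existsP; exists (t2 (j ⊕ d)).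
apply/existsP; exists (t3 k); apply/existsP; exists (t3 (k ⊕ d)).
apply/existsP; exists (t4 (i ⊕ j ⊕ k)); apply/existsP; exists (t4 (i ⊕ j ⊕ k ⊕ d)).
apply/and3P; split => //.
  rewrite /cube_pattern !sigmaE_perm !(inj_eq perm_inj) !bxor_neq //=.
  by apply/andP; split; apply/and4P; split; apply/eqP; bxor_bits.
apply/forall_inP => -[[u v] w]; rewrite !inE /=.
move=> /and3P [/permV_in_pair ui /permV_in_pair vj /permV_in_pair wk].
rewrite /Lc -[u](permKV t1) -[v](permKV t2) -[w](permKV t3) sigmaE_perm (inj_eq perm_inj).
by rewrite -fun_if bxor_swap ?bxor_cube_sum ?swap_free.
Qed.

(* After the swap along [d], the cell (t1 i', t2 j', t3 k') of [cube_at i j k d]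
   holds t4 (i' ⊕ j' ⊕ k' ⊕ d).  Whether it then conflicts depends on t1, t2
   or t3 alone for the two cells collected in each of the following sets; the
   two remaining cells are handled by the bounds on A directly. *)
Definition cube_rows_set i j k d :=
  [set i' | t4 (i ⊕ j ⊕ k ⊕ d) \in A i' (t2 (j ⊕ d)) (t3 k)]
  :|: [set i' | t4 (i ⊕ j ⊕ k) \in A i' (t2 j) (t3 k)].
Definition cube_cols_set i j k d :=
  [set j' | t4 (i ⊕ j ⊕ k ⊕ d) \in A (t1 i) j' (t3 (k ⊕ d))]
  :|: [set j' | t4 (i ⊕ j ⊕ k) \in A (t1 (i ⊕ d)) j' (t3 (k ⊕ d))].
Definition cube_files_set i j k d :=
  [set k' | t4 (i ⊕ j ⊕ k ⊕ d) \in A (t1 (i ⊕ d)) (t2 j) k']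
  :|: [set k' | t4 (i ⊕ j ⊕ k) \in A (t1 i) (t2 j) k'].

Definition cube_rows_hits i j k := hits (bxor i) t1 (cube_rows_set i j k).
Definition cube_cols_hits i j k := hits (bxor j) t2 (cube_cols_set i j k).
Definition cube_files_hits i j k := hits (bxor k) t3 (cube_files_set i j k).

Lemma card_allowed_cubes g i j k : is_mcube g A ->
  n <= #|[set C | allowed_3cube L A C && ((t1 i, t2 j, t3 k) \in C)]|
       + 1 + 2 * g + cube_rows_hits i j k + cube_cols_hits i j k + cube_files_hits i j k.
Proof.
move=> [cell_g [row_g _]].
pose D1 := [set d | t4 (i ⊕ j ⊕ k ⊕ d) \in A (t1 i) (t2 j) (t3 k)].
pose D2 := [set d | t4 (i ⊕ j ⊕ k) \in A (t1 i) (t2 (j ⊕ d)) (t3 k)].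
pose U := [set bzero t] :|: D1 :|: D2 :|: [set d | t1 (i ⊕ d) \in cube_rows_set i j k d]
  :|: [set d | t2 (j ⊕ d) \in cube_cols_set i j k d]
  :|: [set d | t3 (k ⊕ d) \in cube_files_set i j k d].
have card_D1 : #|D1| <= g.
  apply: leq_trans (cell_g (t1 i) (t2 j) (t3 k)).
  apply: (leq_card_in_inj (f := fun d => t4 (i ⊕ j ⊕ k ⊕ d))) => [d d' _ _ /perm_inj/bxorI //|d].
  by rewrite inE.
have card_D2 : #|D2| <= g.
  apply: leq_trans (row_g (t1 i) (t3 k) (t4 (i ⊕ j ⊕ k))).
  apply: (leq_card_in_inj (f := fun d => t2 (j ⊕ d))) => [d d' _ _ /perm_inj/bxorI //|d].
  by rewrite !inE.
have card_U : #|U| <= 1 + g + g + cube_rows_hits i j k + cube_cols_hits i j k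
                      + cube_files_hits i j k.
  by do 5 (apply: leq_trans (leq_card_setU _ _).1 _; apply: leq_add => //); rewrite cards1.
have cube_at_allowed : {in ~: U, forall d,
    allowed_3cube L A (cube_at i j k d) && ((t1 i, t2 j, t3 k) \in cube_at i j k d)}.
  move=> d; rewrite !inE => /norP [/norP [/norP [/norP [/norP [d_neq0 nD1] nD2]
    /norP [nH1 nH1']] /norP [nH2 nH2']] /norP [nH3 nH3']].
  rewrite /= !eqxx !orTb !andbT; apply: allowed_cube_at => // i' j' k'.
  rewrite !inE => /orP [] /eqP-> /orP [] /eqP-> /orP [] /eqP->;
    first [ done
          | by rewrite (_ : _ ⊕ _ ⊕ _ ⊕ d = i ⊕ j ⊕ k ⊕ d) //; bxor_bits
          | by rewrite (_ : _ ⊕ _ ⊕ _ ⊕ d = i ⊕ j ⊕ k) //; bxor_bits ].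
have cube_at_inj : {in ~: U &, injective (cube_at i j k)}.
  move=> d d'; rewrite !inE => /norP [/norP [/norP [/norP [/norP [d_neq0 _] _] _] _] _] _.
  exact: cube_at_inj.
have card_good : #|~: U| <= #|[set C | allowed_3cube L A C && ((t1 i, t2 j, t3 k) \in C)]|.
  by apply: (leq_card_in_inj cube_at_inj) => d /cube_at_allowed; rewrite inE.
have := cardsC U; rewrite card_ord; lia.
Qed.

Definition line_counts i j :=
  [:: row_hits i j; col_hits i j; file_hits i j; rowsym_hits i j; colsym_hits i j;
      filesym_hits i j; transversal_hits i j].
Definition cube_counts i j k :=
  [:: cube_rows_hits i j k; cube_cols_hits i j k; cube_files_hits i j k].

Definition bad_sigma k m :=
  [exists e : 'I_n * 'I_n, has (leq k) (line_counts e.1 e.2)]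
  || [exists c : 'I_n * 'I_n * 'I_n, has (leq m) (cube_counts c.1.1 c.1.2 c.2)].

Lemma good_sigma_lines k m : ~~ bad_sigma k m ->
  [/\ forall i kk, nconf L A (row_set i kk) <= k,
      forall j kk, nconf L A (col_set j kk) <= k,
      forall i j, nconf L A (file_set i j) <= k,
      forall l s, [/\ nconf L A (rowlayer_symset L l s) <= k,
                      nconf L A (collayer_symset L l s) <= k &
                      nconf L A (filelayer_symset L l s) <= k]
    & forall T, is_transversal_set L T -> nconf L A T <= k].
Proof.
rewrite negb_or => /andP [/existsPn no_line _].
have small i j : [/\ row_hits i j <= k, col_hits i j <= k, file_hits i j <= k,
    rowsym_hits i j <= k & [/\ colsym_hits i j <= k, filesym_hits i j <= k &
    transversal_hits i j <= k]].
  move/hasPn: (no_line (i, j)); rewrite /line_counts => below.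
  by split; [..|split]; apply/ltnW; rewrite ltnNge below // !inE eqxx ?orbT.
split.
- by move=> i j; apply: leq_trans (nconf_row i j) _; case: (small (t1^-1 i) (t3^-1 j)).
- by move=> i j; apply: leq_trans (nconf_col i j) _; case: (small (t2^-1 i) (t3^-1 j)).
- by move=> i j; apply: leq_trans (nconf_file i j) _; case: (small (t1^-1 i) (t2^-1 j)).
- move=> l s; split.
  + by apply: leq_trans (nconf_rowsym l s) _; case: (small (t1^-1 l) (t4^-1 s)).
  + by apply: leq_trans (nconf_colsym l s) _; case: (small (t2^-1 l) (t4^-1 s)) => _ _ _ _ [].
  + by apply: leq_trans (nconf_filesym l s) _; case: (small (t3^-1 l) (t4^-1 s)) => _ _ _ _ [].
- move=> T /nconf_transversal [p [q le_pq]].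
  by apply: leq_trans le_pq _; case: (small p q) => _ _ _ _ [].
Qed.

Lemma good_sigma_cubes g k m : is_mcube g A -> ~~ bad_sigma k m ->
  forall c : cell n, n + 2 <= #|[set C | allowed_3cube L A C && (c \in C)]| + 2 * g + 3 * m.
Proof.
rewrite negb_or => hA /andP [_ /existsPn no_cube] [[ci cj] ck]; set cnt := #|_|.
move: (no_cube (t1^-1 ci, t2^-1 cj, t3^-1 ck)); rewrite /cube_counts /= orbF !negb_or -!ltnNge.
have := card_allowed_cubes (t1^-1 ci) (t2^-1 cj) (t3^-1 ck) hA; rewrite !permKV -/cnt.
move=> le_n /and3P [lt_rows lt_cols lt_files]; lia.
Qed.

End RelabelledBooleanCube.

(** * Counting bad quadruples *)

Ltac bound_hits slice size_bound :=
  rewrite expnS mulnA; apply: slice => *; apply: card_perm_many_hits => [? ? /=|?];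
  [by do ?[move/bxorIr | move/bxorI] | size_bound].

Section CountingBadPermutations.

Variables (t g : nat) (A : mcube (2 ^ t)).
Hypothesis hA : is_mcube g A.
Local Notation n := (2 ^ t).

Lemma card_setU_leq2 (X Y : {set 'I_n}) : #|X| <= g -> #|Y| <= g -> #|X :|: Y| <= 2 * g.
Proof. by move=> Xg Yg; rewrite mul2n -addnn (leq_trans (leq_card_setU X Y).1) ?leq_add. Qed.

Lemma sum4_line_counts r i j :
  sum4 (fun a b c d => count (leq r) (line_counts A a b c d i j)) * r`!
    <= 7 * (g ^ r * n`! ^ 4).
Proof.
have [cell_g [row_g [col_g _]]] := hA.
rewrite /= !sum4D sum4_const muln0 addn0 !mulnDl.
rewrite (_ : 7 = 1 + (1 + (1 + (1 + (1 + (1 + 1)))))) // !mulnDl !mul1n.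
repeat apply: leq_add.
- bound_hits sum4_slice4 ltac:(exact: cell_g).
- bound_hits sum4_slice4 ltac:(exact: cell_g).
- bound_hits sum4_slice4 ltac:(exact: cell_g).
- bound_hits sum4_slice2 ltac:(exact: row_g).
- bound_hits sum4_slice1 ltac:(exact: col_g).
- bound_hits sum4_slice1 ltac:(exact: col_g).
- bound_hits sum4_slice4 ltac:(exact: cell_g).
Qed.

Lemma sum4_cube_counts r i j k :
  sum4 (fun a b c d => count (leq r) (cube_counts A a b c d i j k)) * r`!
    <= 3 * ((2 * g) ^ r * n`! ^ 4).
Proof.
have [_ [row_g [col_g file_g]]] := hA.
rewrite /= !sum4D sum4_const muln0 addn0 !mulnDl.
rewrite (_ : 3 = 1 + (1 + 1)) // !mulnDl !mul1n.
repeat apply: leq_add.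
- bound_hits sum4_slice1 ltac:(apply: card_setU_leq2; exact: col_g).
- bound_hits sum4_slice2 ltac:(apply: card_setU_leq2; exact: row_g).
- bound_hits sum4_slice3 ltac:(apply: card_setU_leq2; exact: file_g).
Qed.

End CountingBadPermutations.

Lemma exists_has_leq_count (T : finType) (p : pred nat) (s : T -> seq nat) :
  [exists x, has p (s x)] <= \sum_x count p (s x).
Proof.
case: existsP => [[x px]|_] //.
by rewrite (bigD1 x) //= ltn_addr // -has_count.
Qed.

Lemma sum4_bad_sigma t (A : mcube (2 ^ t)) k m :
  sum4 (fun a b c d => bad_sigma A a b c d k m) <=
    \sum_(e : 'I_(2 ^ t) * 'I_(2 ^ t))
       sum4 (fun a b c d => count (leq k) (line_counts A a b c d e.1 e.2))
  + \sum_(x : 'I_(2 ^ t) * 'I_(2 ^ t) * 'I_(2 ^ t))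
       sum4 (fun a b c d => count (leq m) (cube_counts A a b c d x.1.1 x.1.2 x.2)).
Proof.
rewrite -!sum4_sum -sum4D; apply: leq_sum4 => a b c d; rewrite /bad_sigma.
apply: leq_trans (leq_add (exists_has_leq_count _ _) (exists_has_leq_count _ _)).
by case: [exists _, _]; case: [exists _, _].
Qed.

Import Order.TTheory GRing.Theory Num.Theory.
Local Open Scope ring_scope.

Lemma ler_nat_div (R : realFieldType) (x y d N : nat) :
  (x * d <= y * N)%N -> (0 < d)%N -> x%:R <= y%:R / d%:R * N%:R :> R.
Proof. by move=> le_xy d_gt0; rewrite mulrAC ler_pdivlMr ?ltr0n // -!natrM ler_nat. Qed.

Lemma union_bound_lt (R : realFieldType) (gamma : R) (n g k m N X Y : nat) :
  g%:R = gamma * n%:R -> (0 < N)%N ->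
  (X * k`! <= 7 * n ^ 2 * g ^ k * N)%N -> (Y * m`! <= 3 * n ^ 3 * (2 * g) ^ m * N)%N ->
  7 * n%:R ^+ 2 * (gamma * n%:R) ^+ k / (k`!)%:R
    + 3 * n%:R ^+ 3 * (2 * gamma * n%:R) ^+ m / (m`!)%:R < 1 ->
  (X + Y < N)%N.
Proof.
move=> hg N_gt0 X_le Y_le hineq.
have := ler_nat_div R X_le (fact_gt0 k).
rewrite (natrM _ (7 * n ^ 2)) (natrM _ 7) !natrX hg => XR.
have := ler_nat_div R Y_le (fact_gt0 m).
rewrite (natrM _ (3 * n ^ 3)) (natrM _ 3) !natrX (natrM _ 2) hg (mulrA 2%:R) => YR.
rewrite -(ltr_nat R) natrD; apply: le_lt_trans (lerD XR YR) _.
by rewrite -mulrDl -[X in _ < X]mul1r ltr_pM2r ?ltr0n.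
Qed.

Lemma exists_good_sigma (R : realFieldType) (gamma : R) t g k m (A : mcube (2 ^ t)) :
  is_mcube g A -> g%:R = gamma * (2 ^ t)%N%:R ->
  7 * (2 ^ t)%N%:R ^+ 2 * (gamma * (2 ^ t)%N%:R) ^+ k / (k`!)%:R
    + 3 * (2 ^ t)%N%:R ^+ 3 * (2 * gamma * (2 ^ t)%N%:R) ^+ m / (m`!)%:R < 1 ->
  exists t1 t2 t3 t4, ~~ bad_sigma A t1 t2 t3 t4 k m.
Proof.
move=> hA hg hineq; apply: sum4_lt_exists; apply: leq_ltn_trans (sum4_bad_sigma A k m) _.
apply: (union_bound_lt hg _ _ _ hineq); first by rewrite expn_gt0 fact_gt0.
- rewrite big_distrl /=.
  apply: (@leq_trans (\sum_(e : 'I_(2 ^ t) * 'I_(2 ^ t)) 7 * (g ^ k * (2 ^ t)`! ^ 4))%N).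
    by apply: leq_sum => e _; exact: sum4_line_counts.
  by rewrite sum_nat_const card_prod card_ord; apply: eq_leq; ring.
- rewrite big_distrl /=.
  apply: (@leq_trans (\sum_(x : 'I_(2 ^ t) * 'I_(2 ^ t) * 'I_(2 ^ t))
                        3 * ((2 * g) ^ m * (2 ^ t)`! ^ 4))%N).
    by apply: leq_sum => x _; exact: sum4_cube_counts.
  by rewrite sum_nat_const !card_prod card_ord; apply: eq_leq; ring.
Qed.

Unset Implicit Arguments. Set Strict Implicit.

Theorem mainTheorem2 (R : realFieldType) (alpha gamma kappa : R)
    (t g k m : nat)
    (hg : g%:R = gamma * (2 ^ t)%N%:R)
    (hk : k%:R = kappa * (2 ^ t)%N%:R)
    (hm : m%:R = (1 - alpha - 2 * gamma) * (2 ^ t)%N%:R / 3)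
    (hineq : 7 * (2 ^ t)%N%:R ^+ 2 * (gamma * (2 ^ t)%N%:R) ^+ k / (k`!)%:R
             + 3 * (2 ^ t)%N%:R ^+ 3 * (2 * gamma * (2 ^ t)%N%:R) ^+ m / (m`!)%:R < 1)
    (A : mcube (2 ^ t)) (hA : is_mcube g A) :
  exists t1 t2 t3 t4 : {perm 'I_(2 ^ t)},
    let L := apply_sigma (@boolB t) t1 t2 t3 t4 in
    (* (a) rows *)
    (forall i kk : 'I_(2 ^ t), (nconf L A (row_set i kk) <= k)%N) /\
    (* (b) columns *)
    (forall j kk : 'I_(2 ^ t), (nconf L A (col_set j kk) <= k)%N) /\
    (* (c) files *)
    (forall i j : 'I_(2 ^ t), (nconf L A (file_set i j) <= k)%N) /\
    (* (d) symbol-sets (row layer, column layer, file layer) *)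
    (forall l s : 'I_(2 ^ t),
       [/\ (nconf L A (rowlayer_symset L l s) <= k)%N,
           (nconf L A (collayer_symset L l s) <= k)%N &
           (nconf L A (filelayer_symset L l s) <= k)%N]) /\
    (* (e) transversal-sets *)
    (forall T : {set cell (2 ^ t)}, is_transversal_set L T ->
       (nconf L A T <= k)%N) /\
    (* (f) allowed 3-cubes *)
    (forall c : cell (2 ^ t),
       alpha * (2 ^ t)%N%:R <=
       #|[set C : {set cell (2 ^ t)} | allowed_3cube L A C && (c \in C)]|%:R).
Proof.
have [t1 [t2 [t3 [t4 good]]]] := exists_good_sigma hA hg hineq.
exists t1, t2, t3, t4; cbv zeta.
have [rows cols files symsets transversals] := good_sigma_lines good.
do 5 (split; first done); move=> c.
have := good_sigma_cubes hA good c; rewrite -(ler_nat R) !natrD.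
lra.
Qed.
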